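(* Consider the inexact proximal method described in the context, and assume $F'(x_i)\ne0$ for all iterates considered. Let $\varepsilon>0$ and $K\ge1$ be such that $F(x_k)-F^*\ge\varepsilon$ for $1\le k\le K$. Then for every $1\le k\le K$, $$F(\bar x_k)-F^*\le\frac{L_p\big(\|x_0-x^*\|+\sum_{i=1}^k\delta_i\big)^{p+1}}{k^{\frac{p+1}{2}}}\cdot\frac{(p+1)2^{p-2}V_k(\varepsilon)}{p!},$$ where $\bar x_k=\frac{\sum_{i=1}^ka_ix_i}{\sum_{i=1}^ka_i}$ and $V_k(\varepsilon)=\Big(\frac{\|F'(x_0)\|_*\big(\|x_0-x^*\|+\sum_{i=1}^k\delta_i\big)}{\varepsilon}\Big)^{\frac{p-1}{k}}$.
   Context: $\mathbb{E}$ is a finite-dimensional real vector space with dual $\mathbb{E}^*$; $B:\mathbb{E}\to\mathbb{E}^*$ is a fixed self-adjoint positive-definite operator, $\|x\|=\langle Bx,x\rangle^{1/2}$, $\|g\|_*=\langle g,B^{-1}g\rangle^{1/2}$. Let $p\ge 2$ be an integer, $h:\mathbb{E}\to\mathbb{R}\cup\{+\infty\}$ proper closed convex, and $f$ convex and $p$ times differentiable on an open convex set containing $\operatorname{dom}h$, with $\|D^pf(x)-D^pf(y)\|\le L_p\|x-y\|$ for $x,y\in\operatorname{dom}h$, $0<L_p<\infty$, where for a symmetric $p$-linear form $\|A\|=\max_{\|u\|\le1}|A[u]^p|$. $F=f+h$, attaining its minimum $F^*$ at $x^*\in\operatorname{dom}h$. Inexact proximal method: given $x_0\in\operatorname{dom}h$,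 a fixed subgradient $F'(x_0)\in\partial F(x_0)$, and accuracies $\delta_k\ge0$ ($k\ge1$). For $k\ge0$: set $a_{k+1}=\big(\frac{1}{2\|F'(x_k)\|_*}\big)^{\frac{p-1}{p}}\big(\frac{p!}{(p+1)L_p}\big)^{1/p}$ and $\Phi_{k+1}(x)=a_{k+1}F(x)+\frac12\|x-x_k\|^2$; find $x_{k+1}$ and $g_{k+1}\in\partial\Phi_{k+1}(x_{k+1})$ with $\|g_{k+1}\|_*\le\delta_{k+1}$, and set $F'(x_{k+1})=\frac{1}{a_{k+1}}(g_{k+1}-B(x_{k+1}-x_k))$. *)

From HB Require Import structures.
From mathcomp Require Import all_boot all_order all_algebra.
From mathcomp Require Import all_classical all_reals all_analysis.
Set Implicit Arguments. Unset Strict Implicit. Unset Printing Implicit Defensive.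
Import Order.TTheory GRing.Theory Num.Theory.
Import numFieldNormedType.Exports.
Local Open Scope classical_set_scope.
Local Open Scope ring_scope.

(* E is modelled as 'rV[R]_n; its dual E^* is also represented by row
   vectors, with the pairing <g, x> = g x^T.  B is an n x n matrix. *)
Section Defs.
Context {R : realType} {n : nat}.

Definition pairing (g x : 'rV[R]_n) : R := (g *m x^T) 0 0.

Definition sym_posdef (B : 'M[R]_n) : Prop :=
  B^T = B /\ forall x : 'rV[R]_n, x != 0 -> 0 < pairing (x *m B) x.

(* ||x|| = <Bx, x>^{1/2}  (Bx is represented by x *m B, B symmetric) *)
Definition Bnorm (B : 'M[R]_n) (x : 'rV[R]_n) : R :=
  Num.sqrt (pairing (x *m B) x).

Definition Bdualnorm (B : 'M[R]_n) (g : 'rV[R]_n) : R :=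
  Num.sqrt (pairing g (g *m invmx B)).

Definition convex_dom (U : set 'rV[R]_n) : Prop :=
  forall (x y : 'rV[R]_n) (t : R), U x -> U y -> 0 <= t <= 1 -> U (t *: x + (1 - t) *: y).

Definition convex_fun_on (U : set 'rV[R]_n) (f : 'rV[R]_n -> R) : Prop :=
  forall (x y : 'rV[R]_n) (t : R), U x -> U y -> 0 <= t <= 1 ->
    f (t *: x + (1 - t) *: y) <= t * f x + (1 - t) * f y.

(* f is k times (Frechet) differentiable on U: f is differentiable on U and
   every directional derivative D_v f is (k-1) times differentiable on U. *)
Fixpoint diffn (k : nat) (U : set 'rV[R]_n) (f : 'rV[R]_n -> R) : Prop :=
  match k with
  | 0 => True
  | k'.+1 => (forall x, U x -> differentiable f x) /\
             forall v : 'rV[R]_n, diffn k' U ('D_v f)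
  end.

(* D^p f(x)[u]^p, the p-th derivative applied to (u,...,u) *)
Definition Dpow (p : nat) (f : 'rV[R]_n -> R) (u : 'rV[R]_n) : 'rV[R]_n -> R :=
  iter p (fun g => 'D_u g) f.

Definition dom (h : 'rV[R]_n -> \bar R) : set 'rV[R]_n :=
  [set x | (h x < +oo)%E].

Definition proper_fun (h : 'rV[R]_n -> \bar R) : Prop :=
  (forall x, h x != -oo%E) /\ exists x, (h x < +oo)%E.

Definition closed_fun (h : 'rV[R]_n -> \bar R) : Prop :=
  closed [set xy : 'rV[R]_n * R | (h xy.1 <= xy.2%:E)%E].

Definition convex_efun (h : 'rV[R]_n -> \bar R) : Prop :=
  forall (x y : 'rV[R]_n) (t : R), 0 < t < 1 ->
    (h (t *: x + (1 - t) *: y)%R <= t%:E * h x + (1 - t)%:E * h y)%E.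

Definition subdiff (phi : 'rV[R]_n -> \bar R) (x : 'rV[R]_n) : set 'rV[R]_n :=
  [set g | phi x \is a fin_num /\
           forall y, (phi x + (pairing g (y - x))%:E <= phi y)%E].

Definition Fobj (f : 'rV[R]_n -> R) (h : 'rV[R]_n -> \bar R) (y : 'rV[R]_n) : \bar R :=
  ((f y)%:E + h y)%E.

Definition Phi (B : 'M[R]_n) (f : 'rV[R]_n -> R) (h : 'rV[R]_n -> \bar R)
  (ak : R) (xk y : 'rV[R]_n) : \bar R :=
  (ak%:E * Fobj f h y + (2^-1 * Bnorm B (y - xk) ^+ 2)%:E)%E.

Definition step (B : 'M[R]_n) (p : nat) (L : R) (Fpk : 'rV[R]_n) : R :=
  (1 / (2 * Bdualnorm B Fpk)) `^ ((p%:R - 1) / p%:R) *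
  ((p`!)%:R / ((p%:R + 1) * L)) `^ (p%:R^-1).

Definition xbar (a : nat -> R) (x : nat -> 'rV[R]_n) (k : nat) : 'rV[R]_n :=
  (\sum_(1 <= i < k.+1) a i)^-1 *: \sum_(1 <= i < k.+1) a i *: x i.

Definition Dk (B : 'M[R]_n) (x0 xstar : 'rV[R]_n) (delta : nat -> R) (k : nat) : R :=
  Bnorm B (x0 - xstar) + \sum_(1 <= i < k.+1) delta i.

Definition Vk (B : 'M[R]_n) (p : nat) (Fp0 x0 xstar : 'rV[R]_n) (delta : nat -> R)
  (eps : R) (k : nat) : R :=
  (Bdualnorm B Fp0 * Dk B x0 xstar delta k / eps) `^ ((p%:R - 1) / k%:R).

End Defs.

Set Warnings "-notation-overridden,-ambiguous-paths,-notation-incompatible-prefix,-deprecated".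
From HB Require Import structures.
From mathcomp Require Import all_boot all_order all_algebra.
From mathcomp Require Import all_classical all_reals all_analysis.
From mathcomp Require Import ring lra.
Import Order.TTheory GRing.Theory Num.Theory.
Import numFieldNormedType.Exports.
Local Open Scope classical_set_scope.
Local Open Scope ring_scope.

Section Pairing.
Context {R : realType} {n : nat}.
Implicit Types (g w x y : 'rV[R]_n).

Lemma pairingC g x : pairing g x = pairing x g.
Proof. by rewrite /pairing -(trmxK (g *m x^T)) trmx_mul trmxK [LHS]mxE. Qed.

Lemma pairingDl g1 g2 x : pairing (g1 + g2) x = pairing g1 x + pairing g2 x.
Proof. by rewrite /pairing mulmxDl mxE. Qed.

Lemma pairingZl c g x : pairing (c *: g) x = c * pairing g x.
Proof. by rewrite /pairing -scalemxAl mxE. Qed.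

Lemma pairingDr g x1 x2 : pairing g (x1 + x2) = pairing g x1 + pairing g x2.
Proof. by rewrite pairingC pairingDl -!(pairingC g). Qed.

Lemma pairingZr c g x : pairing g (c *: x) = c * pairing g x.
Proof. by rewrite pairingC pairingZl pairingC. Qed.

Lemma pairingBr g x1 x2 : pairing g (x1 - x2) = pairing g x1 - pairing g x2.
Proof. by rewrite -scaleN1r pairingDr pairingZr mulN1r. Qed.

Lemma pairingBl g1 g2 x : pairing (g1 - g2) x = pairing g1 x - pairing g2 x.
Proof. by rewrite -scaleN1r pairingDl pairingZl mulN1r. Qed.

Lemma pairing0l x : pairing 0 x = 0.
Proof. by rewrite /pairing mul0mx mxE. Qed.

Definition ip (B : 'M[R]_n) w y := pairing (w *m B) y.

Definition Binv (B : 'M[R]_n) g := g *m invmx B.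

Context {B : 'M[R]_n} (HB : sym_posdef B).

Lemma ipC w y : ip B w y = ip B y w.
Proof. by rewrite /ip pairingC /pairing trmx_mul (proj1 HB) mulmxA. Qed.


Lemma ipDl w1 w2 y : ip B (w1 + w2) y = ip B w1 y + ip B w2 y.
Proof. by rewrite /ip mulmxDl pairingDl. Qed.

Lemma ipZl c w y : ip B (c *: w) y = c * ip B w y.
Proof. by rewrite /ip -scalemxAl pairingZl. Qed.

Lemma ipDr w y1 y2 : ip B w (y1 + y2) = ip B w y1 + ip B w y2.
Proof. exact: pairingDr. Qed.

Lemma ipZr c w y : ip B w (c *: y) = c * ip B w y.
Proof. exact: pairingZr. Qed.

Lemma ip_gt0 w : w != 0 -> 0 < ip B w w.
Proof. exact: (proj2 HB). Qed.

Lemma ip_ge0 w : 0 <= ip B w w.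
Proof.
have [->|/ip_gt0/ltW //] := eqVneq w 0.
by rewrite /ip mul0mx pairing0l.
Qed.

Lemma Bnorm_ge0 w : 0 <= Bnorm B w.
Proof. exact: sqrtr_ge0. Qed.

Lemma Bnorm_sqr w : Bnorm B w ^+ 2 = ip B w w.
Proof. by rewrite sqr_sqrtr // ip_ge0. Qed.

Lemma BnormZ c w : Bnorm B (c *: w) = `|c| * Bnorm B w.
Proof.
by rewrite /Bnorm -/(ip B _ _) ipZl ipZr mulrA -expr2 sqrtrM ?sqr_ge0 // sqrtr_sqr.
Qed.

Lemma Bnorm_sqrD w y :
  Bnorm B (w + y) ^+ 2 = Bnorm B w ^+ 2 + 2 * ip B w y + Bnorm B y ^+ 2.
Proof. by rewrite !Bnorm_sqr ipDl !ipDr (ipC y w); ring. Qed.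

Lemma ip_le_Bnorm w y : ip B w y <= Bnorm B w * Bnorm B y.
Proof.
have [->|y0] := eqVneq y 0; first by rewrite /ip pairingC pairing0l mulr_ge0 ?Bnorm_ge0.
set b := ip B w y; set c := ip B y y; have c0 : 0 < c by exact: ip_gt0.
have bc : b ^+ 2 <= ip B w w * c.
  have := sqr_ge0 (Bnorm B (w + (- (b / c)) *: y)).
  rewrite Bnorm_sqrD BnormZ exprMn real_normK ?num_real // sqrrN !Bnorm_sqr ipZr -/b -/c => h.
  rewrite -subr_ge0 (_ : _ - _ = c * (ip B w w + 2 * (- (b / c) * b) + (b / c) ^+ 2 * c)).
    exact: mulr_ge0 (ltW c0) h.
  by field; rewrite lt0r_neq0.
apply: le_trans (ler_norm b) _.
rewrite /Bnorm -!/(ip B _ _) -sqrtrM ?ip_ge0 // -sqrtr_sqr ler_sqrt // mulr_ge0 ?ip_ge0 //.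
Qed.

Lemma ler_BnormD w y : Bnorm B (w + y) <= Bnorm B w + Bnorm B y.
Proof.
rewrite -(@ler_pXn2r _ 2) ?nnegrE ?addr_ge0 ?Bnorm_ge0 // Bnorm_sqrD sqrrD.
have := ip_le_Bnorm w y; rewrite mulr2n; lra.
Qed.

Lemma B_unitmx : B \in unitmx.
Proof.
rewrite unitmxE unitfE; apply/negP => /det0P [v /ip_gt0 + vB].
by rewrite /ip vB pairing0l ltxx.
Qed.

Lemma pairing_Binv g x : pairing g x = ip B (Binv B g) x.
Proof. by rewrite /ip /Binv mulmxKV // B_unitmx. Qed.

Lemma Bdualnorm_Binv g : Bdualnorm B g = Bnorm B (Binv B g).
Proof. by rewrite /Bnorm /Binv mulmxKV // B_unitmx. Qed.

Lemma Binv_mulmxB w : Binv B (w *m B) = w.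
Proof. by rewrite /Binv mulmxK // B_unitmx. Qed.

Lemma BinvB g1 g2 : Binv B (g1 - g2) = Binv B g1 - Binv B g2.
Proof. exact: mulmxBl. Qed.

Lemma BinvZ c g : Binv B (c *: g) = c *: Binv B g.
Proof. by rewrite /Binv scalemxAl. Qed.

Lemma Bdualnorm_gt0 g : g != 0 -> 0 < Bdualnorm B g.
Proof.
move=> g0; rewrite Bdualnorm_Binv sqrtr_gt0 ip_gt0 //.
by apply: contra g0 => /eqP g0; rewrite -(mulmxKV B_unitmx g) -/(Binv B g) g0 mul0mx.
Qed.

End Pairing.

Lemma le0_of_le_tmul {R : realFieldType} (X Y : R) :
  0 <= Y -> (forall t, 0 < t < 1 -> X <= t * Y) -> X <= 0.
Proof.
move=> Y0 XtY; apply/ler_addgt0Pr => e e0; rewrite add0r.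
have Ye : 0 < Y + 2 * e by lra.
apply: le_trans (XtY (e / (Y + 2 * e)) _) _.
  by rewrite divr_gt0 //= ltr_pdivrMr // mul1r; lra.
by rewrite mulrAC ler_pdivrMr // ler_pM2l //; lra.
Qed.

Lemma sumr_nat_ge0 {R : numDomainType} (F : nat -> R) k :
  (forall i, (0 < i <= k)%N -> 0 <= F i) -> 0 <= \sum_(1 <= i < k.+1) F i.
Proof.
by move=> F0; rewrite big_nat_cond sumr_ge0 // => i /andP[/andP[i0 ik] _]; rewrite F0 // i0.
Qed.

Lemma sumr_nat_gt0 {R : numDomainType} (F : nat -> R) k : (0 < k)%N ->
  (forall i, (0 < i <= k)%N -> 0 < F i) -> 0 < \sum_(1 <= i < k.+1) F i.
Proof.
case: k => // k _ F0; rewrite big_nat_recr //= ltr_wpDl ?F0 ?leqnn //.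
by apply: sumr_nat_ge0 => i /andP[i0 ik]; rewrite ltW // F0 // i0 ltnW.
Qed.

Lemma xbarS {R : realType} {n : nat} {a : nat -> R} (x : nat -> 'rV[R]_n) {k} {A : R} :
  A = \sum_(1 <= i < k.+1) a i -> A != 0 -> A + a k.+1 != 0 ->
  xbar a x k.+1 = (A / (A + a k.+1)) *: xbar a x k + (1 - A / (A + a k.+1)) *: x k.+1.
Proof.
move=> AE A0 A'0; rewrite /xbar !(big_nat_recr k.+1) //= -AE scalerDr !scalerA.
by congr (_ *: _ + _ *: _); field; rewrite ?A0.
Qed.

(* The real value of F on dom h (junk outside it, where fine +oo = 0). *)
Definition Freal {R : realType} {n : nat} (f : 'rV[R]_n -> R) (h : 'rV[R]_n -> \bar R)
  (y : 'rV[R]_n) : R := f y + fine (h y).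

Section CompositeObjective.
Context {R : realType} {n : nat}.
Context {U : set 'rV[R]_n} {f : 'rV[R]_n -> R} {h : 'rV[R]_n -> \bar R}.
Hypotheses (hprop : proper_fun h) (hconv : convex_efun h)
  (domU : dom h `<=` U) (fconv : convex_fun_on U f).
Implicit Types (x y z : 'rV[R]_n).
Local Notation Freal := (Freal f h).

Lemma dom_fineK {y} : dom h y -> (fine (h y))%:E = h y.
Proof. by move=> hy; rewrite fineK // fin_numE (proj1 hprop y) lt_eqF. Qed.

Lemma Fobj_Freal {y} : dom h y -> Fobj f h y = (Freal y)%:E.
Proof. by move=> hy; rewrite /Fobj -(dom_fineK hy). Qed.

Lemma Phi_Freal (B : 'M[R]_n) a xp y : dom h y ->
  Phi B f h a xp y = (a * Freal y + 2^-1 * Bnorm B (y - xp) ^+ 2)%:E.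
Proof. by move=> hy; rewrite /Phi Fobj_Freal. Qed.

Lemma dom_convex {y z t} : dom h y -> dom h z -> 0 < t < 1 ->
  dom h (t *: y + (1 - t) *: z).
Proof.
move=> hy hz t01; apply: le_lt_trans (hconv y z t t01) _.
by rewrite -(dom_fineK hy) -(dom_fineK hz) -!EFinM -EFinD ltry.
Qed.

Lemma Freal_convex {y z t} : dom h y -> dom h z -> 0 < t < 1 ->
  Freal (t *: y + (1 - t) *: z) <= t * Freal y + (1 - t) * Freal z.
Proof.
move=> hy hz /[dup] t01 /andP[t0 t1].
have := hconv y z t t01.
rewrite -(dom_fineK hy) -(dom_fineK hz) -(dom_fineK (dom_convex hy hz t01)).
rewrite -!EFinM -EFinD lee_fin.
have := fconv y z t (domU _ hy) (domU _ hz); rewrite (ltW t0) (ltW t1) => /(_ isT).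
rewrite /Freal; lra.
Qed.

Lemma subdiff_Phi_dom {B : 'M[R]_n} {a xp y g} : 0 < a ->
  subdiff (Phi B f h a xp) y g -> dom h y.
Proof.
move=> a0 [+ _]; rewrite /Phi /Fobj /dom /=.
case: (h y) (proj1 hprop y) => [r| |] //= _; first by rewrite ltry.
by rewrite gt0_muley ?lte_fin.
Qed.


Lemma prox_subgradient {B : 'M[R]_n} {a xp xi g z} : sym_posdef B -> 0 < a ->
  subdiff (Phi B f h a xp) xi g -> dom h z ->
  pairing (g - (xi - xp) *m B) (z - xi) <= a * (Freal z - Freal xi).
Proof.
move=> HB a0 sd hz; have hxi := subdiff_Phi_dom a0 sd; case: sd => _ sub.
set d := z - xi; set e := xi - xp.
rewrite -subr_le0; apply: (@le0_of_le_tmul _ _ (2^-1 * ip B d d)).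
  by rewrite mulr_ge0 ?invr_ge0 ?ler0n ?(ip_ge0 HB).
move=> t /[dup] t01 /andP[t0 _].
have dt : t *: z + (1 - t) *: xi - xi = t *: d.
  by rewrite /d scalerBl scale1r scalerBr addrCA addrC addrK.
have et : t *: z + (1 - t) *: xi - xp = e + t *: d.
  by rewrite -dt /e [RHS]addrC addrA subrK.
have := sub (t *: z + (1 - t) *: xi).
have hyt := dom_convex hz hxi t01.
rewrite !Phi_Freal // -EFinD lee_fin dt et.
rewrite pairingZr (Bnorm_sqrD HB e) BnormZ exprMn real_normK ?num_real // ipZr.
rewrite !(Bnorm_sqr HB).
have := ler_wpM2l (ltW a0) (Freal_convex hz hxi t01).
move=> Fconv Fsub; rewrite pairingBl -/(ip B e d) -(ler_pM2l t0); nra.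
Qed.


Lemma Freal_xbar {a : nat -> R} {x : nat -> 'rV[R]_n} {k} : (0 < k)%N ->
  (forall i, (0 < i <= k)%N -> 0 < a i /\ dom h (x i)) ->
  dom h (xbar a x k) /\
  Freal (xbar a x k) * \sum_(1 <= i < k.+1) a i <= \sum_(1 <= i < k.+1) a i * Freal (x i).
Proof.
case: k => // k _; elim: k => [|k IH] ax.
  have [a0 hx] := ax 1%N isT.
  rewrite /xbar !big_nat1 scalerA mulVf ?gt_eqF // scale1r mulrC; split=> //.
have [|hxb Fxb] := IH; first by move=> i /andP[i0 ik]; apply: ax; rewrite i0 ltnW.
have [a0 hx] := ax k.+2 (leqnn _).
have A0 : 0 < \sum_(1 <= i < k.+2) a i.
  apply: sumr_nat_gt0 => // i /andP[i0 ik].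
  by have /ax[] : (0 < i <= k.+2)%N by rewrite i0 ltnW.
move: hxb Fxb A0; set A := \sum_(1 <= i < k.+2) a i => hxb Fxb A0.
have A'0 : 0 < A + a k.+2 by rewrite addr_gt0.
have t01 : 0 < A / (A + a k.+2) < 1.
  by rewrite divr_gt0 //= ltr_pdivrMr // mul1r ltrDl.
rewrite (xbarS x erefl) ?gt_eqF //; split; first exact: dom_convex hxb hx t01.
rewrite !(big_nat_recr k.+2) //= -/A.
apply: le_trans (ler_wpM2r (ltW A'0) (Freal_convex hxb hx t01)) _.
set u := Freal (xbar a x k.+1); set v := Freal (x k.+2).
have -> : (A / (A + a k.+2) * u + (1 - A / (A + a k.+2)) * v) * (A + a k.+2) =
    u * A + a k.+2 * v by field; rewrite gt_eqF.
by rewrite lerD2r.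
Qed.

End CompositeObjective.
Lemma AGM_nat {R : realFieldType} {E : nat -> R} {k} :
  (forall i, (0 < i <= k)%N -> 0 <= E i) ->
  k%:R ^+ k * \prod_(1 <= i < k.+1) E i <= (\sum_(1 <= i < k.+1) E i) ^+ k.
Proof.
case: k => [|k] E0; first by rewrite !big_geq // !mul1r.
rewrite mulrC -ler_pdivlMr ?exprn_gt0 ?ltr0n // -expr_div_n !big_add1 /= !big_mkord.
have := (@leif_AGM R _ predT (fun i : 'I_k.+1 => E i.+1) (fun i _ => E0 i.+1 (ltn_ord i))).1.
by rewrite cardT size_enum_ord.
Qed.

Lemma weights_sum_lower_pow {R : realFieldType} {k P : nat} {C A D eps N0 Nk Pa Pw : R} :
  0 <= Pa -> 0 <= Pw -> 0 <= eps ->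
  k%:R ^+ k * Pa <= A ^+ k -> k%:R ^+ k * Pw ^+ 2 <= D ^+ (2 * k) ->
  eps <= Nk * D -> Pa * Pw ^+ P * N0 ^+ P = C ^+ k * Nk ^+ P ->
  (C ^+ k) ^+ 2 * (k%:R ^+ k) ^+ P.+2 * (eps ^+ P) ^+ 2 <=
  (A ^+ k) ^+ 2 * (D ^+ (2 * k)) ^+ P * (N0 ^+ P * D ^+ P) ^+ 2.
Proof.
move=> Pa0 Pw0 eps0 hPa hPw hNk prodE.
have lerX m (x y : R) : 0 <= x -> x <= y -> x ^+ m <= y ^+ m.
  by move=> x0 xy; rewrite lerXn2r ?nnegrE // (le_trans x0).
set kk := k%:R ^+ k; have kk0 : 0 <= kk by rewrite exprn_ge0.
have squared : (C ^+ k * Nk ^+ P) ^+ 2 * kk ^+ P.+2 =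
    (kk * Pa) ^+ 2 * (kk * Pw ^+ 2) ^+ P * (N0 ^+ P) ^+ 2.
  rewrite -prodE -(addn2 P) exprD [(_ * Pw ^+ 2) ^+ P]exprMn (exprAC Pw 2 P).
  set kP := kk ^+ P; set wP := Pw ^+ P; set nP := N0 ^+ P; ring.
have weights : (kk * Pa) ^+ 2 * (kk * Pw ^+ 2) ^+ P <= (A ^+ k) ^+ 2 * (D ^+ (2 * k)) ^+ P.
  by apply: ler_pM; rewrite ?exprn_ge0 ?mulr_ge0 ?sqr_ge0 ?lerX ?mulr_ge0 ?sqr_ge0.
apply: le_trans (_ : _ <= (C ^+ k) ^+ 2 * kk ^+ P.+2 * (Nk ^+ P * D ^+ P) ^+ 2) _.
  apply: ler_wpM2l; first by rewrite mulr_ge0 ?sqr_ge0 // exprn_ge0.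
  by apply: (lerX); rewrite ?exprn_ge0 // -(exprMn P Nk D) lerX.
have -> : (C ^+ k) ^+ 2 * kk ^+ P.+2 * (Nk ^+ P * D ^+ P) ^+ 2 =
    (C ^+ k * Nk ^+ P) ^+ 2 * kk ^+ P.+2 * (D ^+ P) ^+ 2.
  set cK := C ^+ k; set nP := Nk ^+ P; set dP := D ^+ P; set kP := kk ^+ P.+2; ring.
rewrite squared (exprMn 2 (N0 ^+ P)) [leRHS]mulrA.
apply: ler_wpM2r; first exact: sqr_ge0.
by apply: ler_wpM2r weights; exact: sqr_ge0.
Qed.

Lemma exprn_powR {R : realType} (x r : R) m : 0 <= x -> (x `^ r) ^+ m = x `^ (r * m%:R).
Proof. by move=> x0; rewrite -powR_mulrn ?powR_ge0 // -powRrM. Qed.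

Lemma weights_sum_lower {R : realType} {k p : nat} {C A D eps N0 Nk Pa Pw : R} :
  (0 < k)%N -> (0 < p)%N -> 0 < C -> 0 < A -> 0 < D -> 0 < eps -> 0 < N0 ->
  0 <= Pa -> 0 <= Pw ->
  k%:R ^+ k * Pa <= A ^+ k -> k%:R ^+ k * Pw ^+ 2 <= D ^+ (2 * k) ->
  eps <= Nk * D -> Pa * Pw ^+ (p - 1) * N0 ^+ (p - 1) = C ^+ k * Nk ^+ (p - 1) ->
  C * k%:R `^ ((p%:R + 1) / 2) <= A * D ^+ (p - 1) * (N0 * D / eps) `^ ((p%:R - 1) / k%:R).
Proof.
case: p => // P k0 _ C0 A0 D0 eps0 N00 Pa0 Pw0 hPa hPw hNk.
rewrite subn1 /= natr1 -[P.+1%:R]natr1 addrK => prodE.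
have k0' : 0 <= k%:R :> R by [].
have Q0 : 0 <= N0 * D / eps by rewrite divr_ge0 ?mulr_ge0 ?ltW.
have lhs0 : 0 <= C * k%:R `^ (P.+2%:R / 2) by rewrite mulr_ge0 ?powR_ge0 ?ltW.
have rhs0 : 0 <= A * D ^+ P * (N0 * D / eps) `^ (P%:R / k%:R).
  by rewrite !mulr_ge0 ?powR_ge0 ?exprn_ge0 ?ltW.
rewrite -(@ler_pXn2r _ (2 * k)) ?muln_gt0 ?k0 ?nnegrE //.
rewrite !(exprMn (2 * k)) !exprn_powR //.
have -> : P.+2%:R / 2 * (2 * k)%:R = (P.+2 * k)%:R :> R by rewrite !natrM; field.
have -> : P%:R / k%:R * (2 * k)%:R = (P * 2)%:R :> R.
  by rewrite !natrM; field; rewrite pnatr_eq0 -lt0n.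
have epsP0 : 0 < (eps ^+ P) ^+ 2 by rewrite !exprn_gt0.
rewrite !powR_mulrn // -(ler_pM2r epsP0).
have := weights_sum_lower_pow Pa0 Pw0 (ltW eps0) hPa hPw hNk prodE.
move=> /(le_trans _)/le_trans; apply; first by rewrite (mulnC 2%N) (mulnC P.+2) !exprM.
rewrite -(mulrA _ ((N0 * D / eps) ^+ _)) (exprM _ P 2%N) -(exprMn 2%N) expr_div_n.
by rewrite divfK ?expf_neq0 ?gt_eqF // (exprMn P N0) (exprAC D) (mulnC 2%N) !exprM.
Qed.

Lemma gap_ratio_le {R : realType} {p : nat} {L A S W D V kp : R} :
  (2 <= p)%N -> 0 < L -> 0 < A -> 0 < D -> 0 < V -> 0 < kp -> 0 <= W ->
  2 * S + W <= D ^+ 2 ->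
  (p`!)%:R / ((p%:R + 1) * L) / 2 ^+ (p - 1) * kp <= A * D ^+ (p - 1) * V ->
  S / A <= L * D ^+ p.+1 / kp * ((p%:R + 1) * 2 ^+ (p - 2) * V / (p`!)%:R).
Proof.
case: p => [|[|q]] // _ L0 A0 D0 V0 kp0 W0 SWD.
rewrite !subSS !subn0 (exprS (2 : R) q).
set C := _ / _ / _; set c := (q.+2)`!%:R.
have c0 : 0 < c by rewrite ltr0n fact_gt0.
have C0 : 0 < C by rewrite !divr_gt0 ?mulr_gt0 ?exprn_gt0 ?addr_gt0.
move=> CA; rewrite ler_pdivrMr //.
have -> : L * D ^+ q.+3 / kp * ((q.+2%:R + 1) * 2 ^+ q * V / c) * A =
    D ^+ 2 / 2 * (A * D ^+ q.+1 * V / (C * kp)).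
  rewrite /C -(addn2 q.+1) exprD; set Dq := D ^+ q.+1; set tq := (2 : R) ^+ q.
  by field; rewrite !gt_eqF ?exprn_gt0 // addr_gt0 // ltr_wpDr.
apply: le_trans (_ : S <= D ^+ 2 / 2) _; first lra.
have Ckp0 : 0 < C * kp by rewrite mulr_gt0.
by rewrite ler_peMr ?divr_ge0 ?sqr_ge0 // ler_pdivlMr // mul1r.
Qed.

Section ProximalIterates.
Context {R : realType} {n : nat}.
Context {B : 'M[R]_n} {U : set 'rV[R]_n} {f : 'rV[R]_n -> R} {h : 'rV[R]_n -> \bar R}.
Context {xstar : 'rV[R]_n} {x Fp g : nat -> 'rV[R]_n} {a delta : nat -> R}.
Context {p K : nat} {L eps : R}.
Hypotheses (HB : sym_posdef B) (p2 : (2 <= p)%N) (L0 : 0 < L) (eps0 : 0 < eps).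
Hypotheses (hprop : proper_fun h) (hconv : convex_efun h) (domU : dom h `<=` U)
  (fconv : convex_fun_on U f) (hxs : dom h xstar).
Hypothesis delta_ge0 : forall k, (1 <= k)%N -> 0 <= delta k.
Hypothesis a_step : forall k, (k < K)%N -> a k.+1 = step B p L (Fp k).
Hypothesis prox_step : forall k, (k < K)%N ->
  subdiff (Phi B f h (a k.+1) (x k)) (x k.+1) (g k.+1) /\ Bdualnorm B (g k.+1) <= delta k.+1.
Hypothesis Fp_step : forall k, (k < K)%N ->
  Fp k.+1 = (a k.+1)^-1 *: (g k.+1 - (x k.+1 - x k) *m B).
Hypothesis Fp_neq0 : forall i, (i <= K)%N -> Fp i != 0.
Hypothesis gap : forall k, (1 <= k <= K)%N -> (Fobj f h xstar + eps%:E <= Fobj f h (x k))%E.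

Local Notation N i := (Bdualnorm B (Fp i)).
Local Notation F := (Freal f h).
Local Notation r i := (Bnorm B (x i - xstar)).
Local Notation D k := (Dk B (x 0%N) xstar delta k).
Local Notation C := ((p`!)%:R / ((p%:R + 1) * L) / 2 ^+ (p - 1)).

Lemma N_gt0 {i} : (i <= K)%N -> 0 < N i.
Proof. by move=> iK; apply: Bdualnorm_gt0 => //; exact: Fp_neq0. Qed.

Lemma step_gt0 {i} : (i < K)%N -> 0 < a i.+1.
Proof.
move=> iK; rewrite a_step // mulr_gt0 // powR_gt0 //.
  by rewrite div1r invr_gt0 mulr_gt0 // N_gt0 // ltnW.
by rewrite divr_gt0 ?ltr0n ?fact_gt0 // mulr_gt0 // addr_gt0.
Qed.

Lemma step_pow {i} : (i < K)%N -> a i.+1 ^+ p * N i ^+ (p - 1) = C.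
Proof.
move=> iK; have Ni := N_gt0 (ltnW iK).
have p0 : (0 < p)%N by apply: leq_trans p2.
have q0 : 0 <= 1 / (2 * N i) by rewrite divr_ge0 // mulr_ge0 // ltW.
have Q0 : 0 <= (p`!)%:R / ((p%:R + 1) * L) :> R.
  by rewrite divr_ge0 ?ler0n // mulr_ge0 ?addr_ge0 // ltW.
rewrite a_step // /step exprMn !exprn_powR //.
have -> : (p%:R - 1) / p%:R * p%:R = (p - 1)%:R :> R.
  by rewrite natrB // mulfVK // pnatr_eq0 -lt0n.
rewrite mulVf ?pnatr_eq0 -?lt0n // powRr1 // powR_mulrn // expr_div_n expr1n exprMn.
set Np := N i ^+ (p - 1); set tp := (2 : R) ^+ (p - 1).
have Np0 : Np != 0 by rewrite expf_neq0 // gt_eqF.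
have tp0 : tp != 0 by rewrite expf_neq0.
by field; rewrite tp0 Np0 !gt_eqF // addr_gt0.
Qed.

Lemma dom_iterate {i} : (i < K)%N -> dom h (x i.+1).
Proof. by move=> iK; exact: (subdiff_Phi_dom (f := f) hprop (step_gt0 iK) (proj1 (prox_step _ iK))). Qed.

Lemma prox_residual {i} : (i < K)%N -> g i.+1 - (x i.+1 - x i) *m B = a i.+1 *: Fp i.+1.
Proof. by move=> iK; rewrite Fp_step // scalerA mulfV ?scale1r // gt_eqF // step_gt0. Qed.

Lemma gap_Freal {i} : (i < K)%N -> F xstar + eps <= F (x i.+1).
Proof.
move=> iK; have := gap i.+1 iK.
by rewrite (Fobj_Freal hprop hxs) (Fobj_Freal hprop (dom_iterate iK)) -EFinD lee_fin.
Qed.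

Lemma gap_le_pairing {i} : (i < K)%N ->
  a i.+1 * (F (x i.+1) - F xstar) <= pairing (a i.+1 *: Fp i.+1) (x i.+1 - xstar).
Proof.
move=> iK; have := prox_subgradient hprop hconv domU fconv HB (step_gt0 iK) (proj1 (prox_step _ iK)) hxs.
by rewrite prox_residual // !pairingBr; lra.
Qed.

Lemma Bnorm_Binv_residual {i} : (i < K)%N ->
  Bnorm B (Binv B (a i.+1 *: Fp i.+1)) = a i.+1 * N i.+1.
Proof.
by move=> iK; rewrite BinvZ BnormZ -(Bdualnorm_Binv HB) ger0_norm // ltW // step_gt0.
Qed.

Lemma prox_descent {i} : (i < K)%N ->
  r i.+1 ^+ 2 + 2 * (a i.+1 * (F (x i.+1) - F xstar)) + (a i.+1 * N i.+1) ^+ 2 <=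
  (r i + delta i.+1) ^+ 2.
Proof.
move=> iK; set v := Binv B (a i.+1 *: Fp i.+1); set y := x i.+1 - xstar.
have shift : y + v = (x i - xstar) + Binv B (g i.+1).
  rewrite /v -prox_residual // BinvB (Binv_mulmxB HB) /y opprB.
  by rewrite (addrC (Binv B _)) addrA (addrC (x i.+1 - xstar)) subrKA.
have near : Bnorm B (y + v) <= r i + delta i.+1.
  rewrite shift; apply: le_trans (ler_BnormD HB _ _) _.
  by rewrite lerD2l -(Bdualnorm_Binv HB); exact: (proj2 (prox_step _ iK)).
have := gap_le_pairing iK; rewrite (pairing_Binv HB) -/v (ipC HB) => gp.
have := lerXn2r 2 (Bnorm_ge0 _) (le_trans (Bnorm_ge0 _) near) near.
rewrite (Bnorm_sqrD HB) Bnorm_Binv_residual //; lra.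
Qed.

Lemma eps_le_gap {i} : (i < K)%N -> eps <= N i.+1 * r i.+1.
Proof.
move=> iK; have a0 := step_gt0 iK; rewrite -(ler_pM2l a0).
apply: le_trans (_ : _ <= a i.+1 * (F (x i.+1) - F xstar)) _.
  by rewrite ler_pM2l // lerBrDl gap_Freal.
apply: le_trans (gap_le_pairing iK) _.
rewrite (pairing_Binv HB) mulrA -Bnorm_Binv_residual //; exact: ip_le_Bnorm.
Qed.

Local Notation T m :=
  (\sum_(1 <= i < m.+1) (2 * (a i * (F (x i) - F xstar)) + (a i * N i) ^+ 2)).

Lemma weighted_gap_ge0 {i} : (0 < i <= K)%N -> 0 <= a i * (F (x i) - F xstar).
Proof.
case: i => // i iK; rewrite mulr_ge0 ?ltW ?step_gt0 //.
by have := gap_Freal iK; have := eps0; lra.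
Qed.

Lemma T_ge0 {m} : (m <= K)%N -> 0 <= T m.
Proof.
move=> mK; apply: sumr_nat_ge0 => i /andP[i0 im].
have iK : (0 < i <= K)%N by rewrite i0 (leq_trans im).
by rewrite addr_ge0 ?sqr_ge0 // mulr_ge0 // weighted_gap_ge0.
Qed.

Lemma Dk_ge0 m : 0 <= D m.
Proof.
by rewrite addr_ge0 ?Bnorm_ge0 // sumr_nat_ge0 // => i /andP[i0 _]; exact: delta_ge0.
Qed.

Lemma DkS m : D m.+1 = D m + delta m.+1.
Proof. by rewrite /Dk big_nat_recr //= addrA. Qed.

Lemma descent_sum {m} : (m <= K)%N -> T m + r m ^+ 2 <= D m ^+ 2.
Proof.
elim: m => [|m IH] mK; first by rewrite /Dk !big_geq // add0r addr0.
have IHm := IH (ltnW mK); have T0 := T_ge0 (ltnW mK); have D0 := Dk_ge0 m.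
have rD : r m <= D m.
  by rewrite -(@ler_pXn2r _ 2) ?nnegrE ?Bnorm_ge0 //; lra.
have := prox_descent mK; have := delta_ge0 m.+1 isT.
rewrite DkS big_nat_recr //=; nra.
Qed.

Lemma weights_prod {m} : (m <= K)%N ->
  (\prod_(1 <= i < m.+1) a i) * (\prod_(1 <= i < m.+1) (a i * N i)) ^+ (p - 1) *
  N 0%N ^+ (p - 1) = C ^+ m * N m ^+ (p - 1).
Proof.
elim: m => [|m IH] mK; first by rewrite !big_geq // expr1n !mul1r.
have ap : a m.+1 ^+ p = a m.+1 * a m.+1 ^+ (p - 1).
  by rewrite -exprS subn1 prednK // (leq_trans _ p2).
rewrite !(big_nat_recr m.+1) //= !(exprMn (p - 1)) exprS.
move: (IH (ltnW mK)); set Cm := C ^+ m => IHm.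
rewrite -(step_pow mK) ap; move: IHm.
set Pa := \prod_(1 <= i < m.+1) a i; set Pw := \prod_(1 <= i < m.+1) (a i * N i).
set u := a m.+1; set up := u ^+ (p - 1); set v := N m.+1 ^+ (p - 1).
set w := N m ^+ (p - 1); set Pwp := Pw ^+ (p - 1); set z := N 0%N ^+ (p - 1) => IHm.
transitivity (Pa * Pwp * z * (u * up) * v); first by ring.
by rewrite IHm; ring.
Qed.

Lemma r_le_Dk {m} : (m <= K)%N -> r m <= D m.
Proof.
move=> mK; have dsum := descent_sum mK; have T0 := T_ge0 mK.
by rewrite -(@ler_pXn2r _ 2) ?nnegrE ?Bnorm_ge0 ?Dk_ge0 //; lra.
Qed.

Lemma prox_rate k : (1 <= k <= K)%N ->
  (Fobj f h (xbar a x k) <=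
     Fobj f h xstar +
     (L * D k ^+ p.+1 / (k%:R `^ ((p%:R + 1) / 2)) *
      ((p%:R + 1) * 2 ^+ (p - 2) * Vk B p (Fp 0%N) (x 0%N) xstar delta eps k
       / (p`!)%:R))%:E)%E.
Proof.
case: k => // j /= jK.
have ax i : (0 < i <= j.+1)%N -> 0 < a i /\ dom h (x i).
  case: i => // i /= ij; have iK : (i < K)%N := leq_trans ij jK.
  by split; [exact: step_gt0 | exact: dom_iterate].
have [dom_xbar jensen] := Freal_xbar hprop hconv domU fconv (ltn0Sn j) ax.
set A := \sum_(1 <= i < j.+2) a i in jensen *.
set S := \sum_(1 <= i < j.+2) a i * (F (x i) - F xstar).
set W := \sum_(1 <= i < j.+2) (a i * N i) ^+ 2.
have A0 : 0 < A by apply: sumr_nat_gt0 => // i /ax[].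
have W0 : 0 <= W by apply: sumr_nat_ge0 => i _; exact: sqr_ge0.
have SW : 2 * S + W <= D j.+1 ^+ 2.
  have := descent_sum jK; rewrite big_split /= -mulr_sumr -/S -/W.
  by have := sqr_ge0 (r j.+1); lra.
have eND : eps <= N j.+1 * D j.+1.
  exact: le_trans (eps_le_gap jK) (ler_wpM2l (ltW (N_gt0 jK)) (r_le_Dk jK)).
have D0 : 0 < D j.+1.
  by rewrite lt_def Dk_ge0 andbT; apply: contraTneq eND => ->; rewrite mulr0 -ltNge.
have p0 : (0 < p)%N by apply: leq_trans p2.
have C0 : 0 < C.
  by rewrite !divr_gt0 ?exprn_gt0 ?ltr0n ?fact_gt0 // mulr_gt0 // addr_gt0.
have hPa := AGM_nat (fun i ij => ltW (ax i ij).1).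
have hPw : j.+1%:R ^+ j.+1 * (\prod_(1 <= i < j.+2) (a i * N i)) ^+ 2 <= D j.+1 ^+ (2 * j.+1).
  rewrite -prodrXl exprM.
  apply: le_trans (AGM_nat (E := fun i => (a i * N i) ^+ 2) (fun i _ => sqr_ge0 _)) _.
  have S0 : 0 <= S.
    by apply: sumr_nat_ge0 => i /andP[i0 ij]; rewrite weighted_gap_ge0 // i0 (leq_trans ij).
  by rewrite -/W lerXn2r ?nnegrE ?sqr_ge0 //; lra.
have Pa0 : 0 <= \prod_(1 <= i < j.+2) a i.
  by rewrite big_nat_cond prodr_ge0 // => i /andP[/ax[/ltW]].
have Pw0 : 0 <= \prod_(1 <= i < j.+2) (a i * N i).
  rewrite big_nat_cond prodr_ge0 // => i /andP[/[dup] /ax[/ltW a0 _] /andP[_ ij] _].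
  by rewrite mulr_ge0 // ltW // N_gt0 // (leq_trans (ij : (i <= j.+1)%N)) .
have key := weights_sum_lower (ltn0Sn j) p0 C0 A0 D0 eps0 (N_gt0 (leq0n K))
  Pa0 Pw0 hPa hPw eND (weights_prod jK).
have V0 : 0 < Vk B p (Fp 0%N) (x 0%N) xstar delta eps j.+1.
  by rewrite powR_gt0 // !divr_gt0 ?mulr_gt0 ?N_gt0.
have ratio := gap_ratio_le p2 L0 A0 D0 V0 (powR_gt0 _ (ltr0Sn _ j)) W0 SW key.
rewrite (Fobj_Freal hprop dom_xbar) (Fobj_Freal hprop hxs) -EFinD lee_fin.
apply: le_trans (_ : _ <= F xstar + S / A) _; last by rewrite lerD2l.
rewrite -(ler_pM2r A0) [leRHS]mulrDl divfK ?gt_eqF // addrC.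
have -> : S + F xstar * A = \sum_(1 <= i < j.+2) a i * F (x i).
  by rewrite /S /A mulr_sumr -big_split; apply: eq_bigr => i _ /=; ring.
exact: jensen.
Qed.

End ProximalIterates.

Theorem lemma3 (R : realType) (n p : nat) (B : 'M[R]_n) (L : R)
  (U : set 'rV[R]_n) (f : 'rV[R]_n -> R) (h : 'rV[R]_n -> \bar R)
  (xstar : 'rV[R]_n) (x Fp g : nat -> 'rV[R]_n) (a delta : nat -> R)
  (eps : R) (K : nat) :
  sym_posdef B -> (2 <= p)%N -> 0 < L ->
  proper_fun h -> closed_fun h -> convex_efun h ->
  open U -> convex_dom U -> dom h `<=` U ->
  convex_fun_on U f -> diffn p U f ->
  (forall y z u, dom h y -> dom h z -> Bnorm B u <= 1 ->
     `|Dpow p f u y - Dpow p f u z| <= L * Bnorm B (y - z)) ->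
  dom h xstar -> (forall y, (Fobj f h xstar <= Fobj f h y)%E) ->
  dom h (x 0%N) -> subdiff (Fobj f h) (x 0%N) (Fp 0%N) ->
  (forall k, (1 <= k)%N -> 0 <= delta k) ->
  (forall k, (k < K)%N -> a k.+1 = step B p L (Fp k)) ->
  (forall k, (k < K)%N ->
     subdiff (Phi B f h (a k.+1) (x k)) (x k.+1) (g k.+1) /\
     Bdualnorm B (g k.+1) <= delta k.+1) ->
  (forall k, (k < K)%N ->
     Fp k.+1 = (a k.+1)^-1 *: (g k.+1 - (x k.+1 - x k) *m B)) ->
  (forall i, (i <= K)%N -> Fp i != 0) ->
  0 < eps -> (1 <= K)%N ->
  (forall k, (1 <= k <= K)%N -> (Fobj f h xstar + eps%:E <= Fobj f h (x k))%E) ->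
  forall k, (1 <= k <= K)%N ->
  (Fobj f h (xbar a x k) <=
     Fobj f h xstar +
     (L * Dk B (x 0%N) xstar delta k ^+ p.+1 / (k%:R `^ ((p%:R + 1) / 2)) *
      ((p%:R + 1) * 2 ^+ (p - 2) * Vk B p (Fp 0%N) (x 0%N) xstar delta eps k
       / (p`!)%:R))%:E)%E.
Proof.
move=> HB p2 L0 hprop _ hconv _ _ domU fconv _ _ hxs _ _ _ delta_ge0 a_step prox_step
  Fp_step Fp_neq0 eps0 _ gap.
exact: (prox_rate HB p2 L0 eps0 hprop hconv domU fconv hxs delta_ge0 a_step prox_step
  Fp_step Fp_neq0 gap).
Qed.
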